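(* Let $P$ be the face poset of a convex polytope $\mathcal P$ and let $Pr(P)$ be the face poset of the prism over $\mathcal P$. Then $$\mathcal{M}_{Pr(P)}(z)=(3-2z)\bigl(\mathcal{M}_P(z)-g^P_{-1}(z)\bigr)+g^{Pr(P)}_{-1}(z).$$
   Context: The face poset of a convex polytope with vertex set $V$ is the set of vertex sets of its faces (including the whole polytope) together with $\emptyset$, ordered by inclusion, ranked by dimension ($|\emptyset|=-1$). For a $d$-dimensional polytope $\mathcal P$, the prism over $\mathcal P$ is the convex hull of two copies of $\mathcal P$ placed in the hyperplanes $x=0$ and $x=1$ of $\mathbb{R}^{d+1}$; its faces are the two copies of each face of $\mathcal P$ and, for each face $F$ of $\mathcal P$, the face of dimension $\dim F+1$ joining the two copies of $F$. The Möbius function $\mu$ is $\mu[p,p]=1$, $\mu[p,q]=-\sum_{p\le s<q}\mu[p,s]$ for $p<q$, $0$ if $p\not\le q$; $\mu_z[p,q]=\mu[p,q]z^{|q|-|p|}$; the Möbius polynomial is $\mathcal{M}_P(z)=\sum_{p\le q\in P}\mu_z[p,q]$; the bottom polynomial is $g^P_{-1}(z)=\sum_{p\le q,\ |p|\le -1\le |q|}\mu_z[p,q]$. *)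

From HB Require Import structures.
From mathcomp Require Import all_boot all_order all_algebra.
From Stdlib Require Import ClassicalEpsilon.
Set Implicit Arguments. Unset Strict Implicit. Unset Printing Implicit Defensive.
Import Order.TTheory GRing.Theory Num.Theory.
Local Open Scope ring_scope.

Section Polytope.
Variables (R : realFieldType) (n : nat) (T : finType) (V : T -> 'rV[R]_n).

(* F is the vertex set of a face of conv(V): the set of points of V on which
   some linear functional c attains its maximum b over V.  c = 0, b = 0 gives
   the whole polytope; c = 0, b = 1 gives the empty face. *)
Definition is_face (F : {set T}) : Prop :=
  exists (c : 'cV[R]_n) (b : R),
    (forall x, (V x *m c) 0 0 <= b) /\
    (forall x, (x \in F) = ((V x *m c) 0 0 == b)).

Definition faceb (F : {set T}) : bool :=
  if excluded_middle_informative (is_face F) then true else false.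

(* V is the vertex set of the polytope conv(V): each V x is a vertex
   (a 0-dimensional face), which also forces V injective. *)
Definition is_vertex_set : Prop := forall x : T, is_face [set x].

(* dimension of (the affine hull of) a face: rank of the rows (V x, 1), minus 1;
   the empty face has dimension -1. *)
Definition face_dim (F : {set T}) : int :=
  (\rank (\matrix_(i < #|T|, j < n + 1)
           (if enum_val i \in F then row_mx (V (enum_val i)) (1 : 'rV[R]_1) 0 j
            else 0)))%:Z - 1.

Fixpoint mobf (k : nat) (p q : {set T}) : int :=
  match k with
  | 0 => if p == q then 1 else 0
  | k'.+1 =>
      if p == q then 1
      else if p \proper q then
        - \sum_(s : {set T} | [&& faceb s, p \subset s & s \proper q]) mobf k' p s
      else 0
  end.

Definition mobius (p q : {set T}) : int := mobf #|q| p q.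

Definition mobius_z (p q : {set T}) : {poly int} :=
  (mobius p q)%:P * 'X^(absz (face_dim q - face_dim p)).

Definition mobius_poly : {poly int} :=
  \sum_(p : {set T} | faceb p) \sum_(q : {set T} | faceb q && (p \subset q))
     mobius_z p q.

Definition bottom_poly : {poly int} :=
  \sum_(p : {set T} | faceb p) \sum_(q : {set T} | [&& faceb q, p \subset q,
         face_dim p <= -1 & -1 <= face_dim q])
     mobius_z p q.

End Polytope.

Definition prism_vert (R : realFieldType) (n : nat) (T : finType)
  (V : T -> 'rV[R]_n) (x : (T + T)%type) : 'rV[R]_(n + 1) :=
  match x with
  | inl t => row_mx (V t) 0
  | inr t => row_mx (V t) 1
  end.

(* The nonempty faces of the prism are the bottom copy, the top copy and the
   vertical prism of each nonempty face G of P; call these the three kinds of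
   G.  The kinds form the poset bottom, top < vertical, and an interval of the
   prism between nonempty faces is the product of an interval [F, G] of P with
   an interval of kinds, so the Moebius function gets multiplied by 1, 1, 1,
   -1 or -1 (the last two for bottom < vertical and top < vertical, which also
   raise the rank difference by one).  Hence each pair F <= G of nonempty faces
   contributes mu_z[F, G] (3 - 2z) to the prism, while the pairs involving the
   empty face are exactly those counted by the bottom polynomials. *)

From HB Require Import structures.
From mathcomp Require Import all_boot all_order all_algebra.
From Stdlib Require Import ClassicalEpsilon.
From mathcomp Require Import zify ring lra.
Set Implicit Arguments. Unset Strict Implicit. Unset Printing Implicit Defensive.
Import Order.TTheory GRing.Theory Num.Theory.
Local Open Scope ring_scope.

Section Mobius.
Variables (R : realFieldType) (n : nat) (T : finType) (V : T -> 'rV[R]_n).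

Lemma facebP (F : {set T}) : reflect (is_face V F) (faceb V F).
Proof. by rewrite /faceb; case: excluded_middle_informative => h; constructor. Qed.

Lemma mobfS k (p q : {set T}) : (#|q| <= k)%N -> mobf V k.+1 p q = mobf V k p q.
Proof.
elim: k p q => [|k IHk] p q hq.
  have -> : q = set0 by apply/eqP; rewrite -cards_eq0 -leqn0.
  by rewrite /=; case: eqP => //; rewrite properE sub0set andbF.
rewrite [LHS]/= [RHS]/=; case: eqP => // _; case: ifP => // _.
congr (- _); apply: eq_bigr => s /and3P[_ _ sq]; apply: IHk.
by have := proper_card sq; lia.
Qed.

Lemma mobf_mobius k (p q : {set T}) : (#|q| <= k)%N -> mobf V k p q = mobius V p q.
Proof.
move=> hq; rewrite /mobius; elim: k hq => [|k IHk] hq.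
  by move: hq; rewrite leqn0 => /eqP->.
case: (ltngtP #|q| k.+1) => h; first by rewrite mobfS ?IHk.
  by move: hq; rewrite leqNgt h.
by rewrite h.
Qed.

Lemma mobius_rec (p q : {set T}) : mobius V p q =
  if p == q then 1 else if p \proper q then
    - \sum_(s : {set T} | [&& faceb V s, p \subset s & s \proper q]) mobius V p s
  else 0.
Proof.
rewrite {1}/mobius; case hq: #|q| => [|k] /=.
  by case: eqP => //; case: ifP => // pq; have := proper_card pq; rewrite hq.
case: eqP => // _; case: ifP => // _; congr (- _).
apply: eq_bigr => s /and3P[_ _ sq]; apply: mobf_mobius.
by have := proper_card sq; rewrite hq.
Qed.

Lemma sum_mobius_proper (p q : {set T}) : p \subset q -> p != q ->
  \sum_(s : {set T} | [&& faceb V s, p \subset s & s \proper q]) mobius V p s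
  = - mobius V p q.
Proof.
by move=> pq npq; rewrite [in RHS]mobius_rec (negbTE npq) properEneq npq pq opprK.
Qed.

Lemma mobius_unique (p : {set T}) (h : {set T} -> int) :
  (forall q, faceb V q -> p \subset q -> h q = if p == q then 1 else
    - \sum_(s : {set T} | [&& faceb V s, p \subset s & s \proper q]) h s) ->
  forall q, faceb V q -> p \subset q -> h q = mobius V p q.
Proof.
move=> hrec q; have [k] := ubnP #|q|; elim: k q => // k IHk q hk fq pq.
rewrite hrec // mobius_rec; case: eqP => // /eqP npq.
rewrite properEneq npq pq; congr (- _); apply: eq_bigr => s /and3P[fs ps sq].
by apply: IHk => //; have := proper_card sq; lia.
Qed.

End Mobius.

Section FaceDimension.
Variables (R : realFieldType) (n : nat) (T : finType) (V : T -> 'rV[R]_n).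

Definition homog_vert (x : T) : 'rV[R]_(n + 1) := row_mx (V x) 1.

Definition homog_span (F : {set T}) := (\sum_(x in F) <<homog_vert x>>)%MS.

Lemma face_dim_rank (F : {set T}) : face_dim V F = (\rank (homog_span F))%:Z - 1.
Proof.
rewrite /face_dim; congr (Posz _ - _).
set A := \matrix_(i, j) _.
have rowA i : row i A = if enum_val i \in F then homog_vert (enum_val i) else 0.
  by apply/rowP => j; rewrite !mxE; case: ifP; rewrite ?mxE.
have -> : (A :=: \sum_i <<row i A>>)%MS.
  apply/eqmxP/andP; split.
    by apply/row_subP => i; apply: (sumsmx_sup i) => //; rewrite genmxE.
  by apply/sumsmx_subP => i _; rewrite genmxE row_sub.
under eq_bigr => i _ do rewrite rowA (fun_if genmx) genmx0.
rewrite -big_mkcond /= /homog_span (reindex (@enum_val _ (mem T))) //=.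
by exists enum_rank => x _; [exact: enum_valK | exact: enum_rankK].
Qed.

Lemma face_dim0 : face_dim V set0 = -1.
Proof. by rewrite face_dim_rank /homog_span big_set0 mxrank0. Qed.

Lemma face_dim_ge0 (F : {set T}) : F != set0 -> 0 <= face_dim V F.
Proof.
case/set0Pn => x xF; rewrite face_dim_rank subr_ge0 lez_nat.
apply: leq_trans (mxrankS (sumsmx_sup x xF (submx_refl _))).
by rewrite genmxE lt0n mxrank_eq0 row_mx_eq0 oner_eq0 andbF.
Qed.

Lemma face_dimS (F G : {set T}) : F \subset G -> face_dim V F <= face_dim V G.
Proof.
move=> FG; rewrite !face_dim_rank lerD2r lez_nat; apply: mxrankS.
by apply/sumsmx_subP => x xF; apply: (sumsmx_sup x (subsetP FG x xF)).
Qed.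

Lemma face_dim_ge_m1 (F : {set T}) : -1 <= face_dim V F.
Proof. by rewrite face_dim_rank lerBrDr addNr. Qed.

Lemma face_dim_le_m1 (F : {set T}) : (face_dim V F <= -1) = (F == set0).
Proof.
have [->|F0] := eqVneq F set0; first by rewrite face_dim0.
by apply/negbTE; rewrite -ltNge (lt_le_trans _ (face_dim_ge0 F0)).
Qed.

Lemma mobius_poly_sub_bottom : mobius_poly V - bottom_poly V =
  \sum_(p : {set T} | faceb V p && (p != set0))
    \sum_(q : {set T} | faceb V q && (q != set0))
      (if p \subset q then mobius_z V p q else 0).
Proof.
rewrite /mobius_poly /bottom_poly (bigID (fun p => p == set0)) /=.
rewrite [X in _ - X](bigID (fun p => p == set0)) /=.
rewrite [X in _ - (_ + X)]big1 => [|p /andP[_ /negbTE p0]]; last first.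
  by apply: big_pred0 => q; rewrite face_dim_le_m1 p0 !andbF.
rewrite addr0 [X in _ + _ - X](eq_bigr (fun p : {set T} =>
   \sum_(q | faceb V q && (p \subset q)) mobius_z V p q)); last first.
  move=> p /andP[_ /eqP ->]; apply: eq_bigl => q.
  by rewrite face_dim0 lexx face_dim_ge_m1 !andbT.
rewrite addrAC subrr add0r; apply: eq_bigr => p /andP[_ p0].
rewrite -big_mkcondr; apply: eq_bigl => q.
case pq: (p \subset q); rewrite ?andbF // !andbT.
suff -> : q != set0 by rewrite andbT.
by apply: contraNneq p0 => q0; rewrite -subset0 -q0.
Qed.

End FaceDimension.

Section PrismFace.
Variable T : finType.

(* Kinds of prism faces: [Some false] is the bottom copy (in x = 0),
   [Some true] the top copy, [None] the vertical prism. *)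
Definition prism_face (k : option bool) (G : {set T}) : {set T + T} :=
  [set x : T + T | match x with
                   | inl t => (k != Some true) && (t \in G)
                   | inr t => (k != Some false) && (t \in G) end].

Definition kind_le (a b : option bool) := (a == b) || (b == None).

Definition mobius_kind (a b : option bool) : int :=
  if a == b then 1 else if b == None then -1 else 0.

Definition prism_base (S : {set T + T}) : {set T} :=
  [set t | (inl t \in S) || (inr t \in S)].

Definition prism_kind (S : {set T + T}) : option bool :=
  if [exists t, inl t \in S] then
    if [exists t, inr t \in S] then None else Some false
  else Some true.

Lemma prism_face0 k : prism_face k set0 = set0.
Proof. by apply/setP => -[t|t]; rewrite !inE andbF. Qed.

Lemma prism_face_eq0 k G : (prism_face k G == set0) = (G == set0).
Proof.
apply/idP/idP => [|/eqP->]; last by rewrite prism_face0.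
apply: contraTT => /set0Pn[t tG]; apply/set0Pn.
by case: k => [[]|]; [exists (inr t) | exists (inl t) | exists (inl t)];
   rewrite inE tG.
Qed.

Lemma prism_face_subset a b F G : F != set0 ->
  (prism_face a F \subset prism_face b G) = (F \subset G) && kind_le a b.
Proof.
case/set0Pn => t0 t0F; rewrite /kind_le.
apply/subsetP/andP => [sub|[/subsetP FG ab] x]; last first.
  by case: x => t; rewrite !inE => /andP[ha tF]; rewrite FG // andbT;
     move: ab ha; case: a b => [[]|] [[]|].
have subl t : t \in F -> a != Some true -> (b != Some true) && (t \in G).
  by move=> tF ha; have := sub (inl t); rewrite !inE ha tF; apply.
have subr t : t \in F -> a != Some false -> (b != Some false) && (t \in G).
  by move=> tF ha; have := sub (inr t); rewrite !inE ha tF; apply.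
split.
  apply/subsetP => t tF; case: a sub subl subr => [[]|] _ subl subr;
  by [case/andP: (subr t tF isT) | case/andP: (subl t tF isT)].
move: (subl t0 t0F) (subr t0 t0F); case: a b sub {subl subr} => [[]|] [[]|] //= _ hl hr;
by [have := hl isT | have := hr isT | case/andP: (hl isT) | case/andP: (hr isT)].
Qed.

Lemma prism_face_inj a b F G : F != set0 ->
  (prism_face a F == prism_face b G) = (F == G) && (a == b).
Proof.
move=> F0; apply/eqP/andP => [E|[/eqP-> /eqP->] //].
have G0 : G != set0 by rewrite -(prism_face_eq0 b) -E prism_face_eq0.
have := prism_face_subset a b G F0; have := prism_face_subset b a F G0.
rewrite E subxx => /esym/andP[GF ba] /esym/andP[FG ab].
by rewrite eqEsubset FG GF; move: ab ba; rewrite /kind_le; case: a b E => [[]|] [[]|].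
Qed.

Lemma prism_baseK k G : prism_base (prism_face k G) = G.
Proof. by apply/setP => t; rewrite !inE; case: (t \in G); case: k => [[]|]. Qed.

Lemma prism_kindK k G : G != set0 -> prism_kind (prism_face k G) = k.
Proof.
case/set0Pn => t0 t0G; rewrite /prism_kind.
have -> : [exists t, inl t \in prism_face k G] = (k != Some true).
  apply/existsP/idP => [[t]|hk]; first by rewrite inE => /andP[].
  by exists t0; rewrite inE hk.
have -> : [exists t, inr t \in prism_face k G] = (k != Some false).
  apply/existsP/idP => [[t]|hk]; first by rewrite inE => /andP[].
  by exists t0; rewrite inE hk.
by case: k => [[]|].
Qed.

Lemma sum_kind (W : nmodType) (f : option bool -> W) :
  \sum_(k : option bool) f k = f None + f (Some true) + f (Some false).
Proof. by rewrite unlock /reducebig /index_enum !unlock /= !unlock /= addr0 addrA. Qed.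

End PrismFace.

Section PrismGeometry.
Variables (R : realFieldType) (n : nat) (T : finType) (V : T -> 'rV[R]_n).

Lemma prism_vert_inl (c : 'cV[R]_n) (h : 'cV[R]_1) t :
  (prism_vert V (inl t) *m col_mx c h) 0 0 = (V t *m c) 0 0.
Proof. by rewrite /= mul_row_col mul0mx addr0. Qed.

Lemma prism_vert_inr (c : 'cV[R]_n) (h : 'cV[R]_1) t :
  (prism_vert V (inr t) *m col_mx c h) 0 0 = (V t *m c) 0 0 + h 0 0.
Proof. by rewrite /= mul_row_col mul1mx mxE. Qed.

Lemma is_face_prism_face k G : is_face V G -> is_face (prism_vert V) (prism_face k G).
Proof.
case=> c [b [cmax Ge]].
have cst (a : R) : (const_mx a : 'cV[R]_1) 0 0 = a by rewrite mxE.
case: k => [[]|].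
- exists (col_mx c (const_mx 1)), (b + 1); split => -[] t;
    rewrite ?prism_vert_inl ?prism_vert_inr ?cst ?inE /= ?Ge; have := cmax t.
  + by lra.
  + by lra.
  + by move=> ?; apply/esym/negbTE/eqP; lra.
  + by move=> _; apply/eqP/eqP; lra.
- exists (col_mx c (const_mx (-1))), b; split => -[] t;
    rewrite ?prism_vert_inl ?prism_vert_inr ?cst ?inE /= ?Ge; have := cmax t.
  + by [].
  + by lra.
  + by [].
  + by move=> ?; apply/esym/negbTE/eqP; lra.
- exists (col_mx c (const_mx 0)), b; split => -[] t;
    by rewrite ?prism_vert_inl ?prism_vert_inr ?cst ?addr0 ?inE /= ?Ge.
Qed.

(* A functional (c, h) on the prism is maximized on the bottom copy, the top
   copy or the vertical prism of the face of P where c is maximal, according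
   to the sign of h. *)
Lemma prism_faceP (S : {set T + T}) : is_face (prism_vert V) S ->
  exists k G, is_face V G /\ S = prism_face k G.
Proof.
case=> c [b []]; rewrite -[c]vsubmxK.
set c' := usubmx c; set h := dsubmx c 0 0; set v := fun t => (V t *m c') 0 0.
move=> cmax Se.
have vl t : v t <= b by have := cmax (inl t); rewrite prism_vert_inl.
have vr t : v t + h <= b by have := cmax (inr t); rewrite prism_vert_inr.
have Sl t : (inl t \in S) = (v t == b) by rewrite Se prism_vert_inl.
have Sr t : (inr t \in S) = (v t + h == b) by rewrite Se prism_vert_inr.
have face_level b' : (forall t, v t <= b') -> is_face V [set t | v t == b'].
  by move=> vle; exists c', b'; split => // t; rewrite inE.
case: (ltgtP h 0) => hs.
- exists (Some false), [set t | v t == b]; split; first exact: face_level.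
  apply/setP => -[t|t]; rewrite !inE /= ?Sl ?Sr //.
  by apply/negbTE/eqP; have := vl t; lra.
- exists (Some true), [set t | v t == b - h]; split.
    by apply: face_level => t; have := vr t; lra.
  apply/setP => -[t|t]; rewrite !inE /= ?Sl ?Sr.
    by apply/negbTE/eqP; have := vr t; lra.
  by apply/eqP/eqP; lra.
- exists None, [set t | v t == b]; split; first exact: face_level.
  by apply/setP => -[t|t]; rewrite !inE /= ?Sl ?Sr // hs addr0.
Qed.

Lemma faceb_prism_face k G : faceb V G -> faceb (prism_vert V) (prism_face k G).
Proof. by move/facebP => fG; apply/facebP; apply: is_face_prism_face. Qed.

Lemma faceb_prismP (S : {set T + T}) : faceb (prism_vert V) S ->
  exists k G, faceb V G /\ S = prism_face k G.
Proof.
by move/facebP/prism_faceP => [k [G [fG ->]]]; exists k, G; split => //; apply/facebP.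
Qed.

Lemma sum_prism_faces (W : nmodType) (f : {set T + T} -> W) :
  \sum_(S | faceb (prism_vert V) S && (S != set0)) f S =
  \sum_(G | faceb V G && (G != set0)) \sum_(k : option bool) f (prism_face k G).
Proof.
rewrite pair_big_dep /=.
pose A := [set p : {set T} * option bool | faceb V p.1 && (p.1 != set0)].
rewrite (eq_bigl [in (fun p => prism_face p.2 p.1) @: A]); last first.
  move=> S; apply/andP/imsetP => [[fS S0]|[[G k]]].
    have [k [G [fG SE]]] := faceb_prismP fS.
    by exists (G, k); rewrite // inE fG -(prism_face_eq0 k) -SE.
  by rewrite inE /= => /andP[fG G0] ->; rewrite faceb_prism_face ?prism_face_eq0.
rewrite big_imset => [|[G k] [G' k']]; last first.
  rewrite inE /= => /andP[_ G0] _ /eqP.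
  by rewrite prism_face_inj // => /andP[/eqP-> /eqP->].
by apply: eq_bigl => p; rewrite inE andbT.
Qed.

End PrismGeometry.

Section PrismDimension.
Variables (R : realFieldType) (n : nat) (T : finType) (V : T -> 'rV[R]_n).

Definition lift_bottom : 'M[R]_(n + 1, n + 1 + 1) :=
  col_mx (row_mx (row_mx 1%:M 0) 0) (row_mx 0 1).
Definition lift_top : 'M[R]_(n + 1, n + 1 + 1) :=
  col_mx (row_mx (row_mx 1%:M 0) 0) (row_mx (row_mx 0 1) 1).
Definition drop_height : 'M[R]_(n + 1 + 1, n + 1) :=
  col_mx (col_mx (row_mx 1%:M 0) 0) (row_mx 0 1).
Definition height_vec : 'rV[R]_(n + 1 + 1) := row_mx (row_mx 0 1) 0.
Definition height_coord : 'cV[R]_(n + 1 + 1) := col_mx (col_mx 0 1) 0.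

Local Notation prism_homog_vert := (homog_vert (prism_vert V)).

Lemma homog_vert_bottom t : homog_vert V t *m lift_bottom = prism_homog_vert (inl t).
Proof.
rewrite /homog_vert mul_row_col !mul_mx_row !mulmx1 !mulmx0.
by rewrite add_row_mx addr0 add0r.
Qed.

Lemma homog_vert_top t : homog_vert V t *m lift_top = prism_homog_vert (inr t).
Proof.
rewrite /homog_vert mul_row_col !mul_mx_row !mulmx1 !mulmx0.
by rewrite !add_row_mx !addr0 !add0r.
Qed.

Lemma row_free_lift_bottom : row_free lift_bottom.
Proof.
apply/row_freeP; exists drop_height.
rewrite !mul_col_mx !mul_row_col !mul0mx !mul1mx !addr0 add0r.
by rewrite (scalar_mx_block n 1).
Qed.

Lemma row_free_lift_top : row_free lift_top.
Proof.
apply/row_freeP; exists drop_height.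
rewrite !mul_col_mx !mul_row_col !mul0mx !mul1mx !addr0 !add0r.
by rewrite (scalar_mx_block n 1).
Qed.

Lemma rank_sumsmxMfree k m (G : {set T}) (x : T -> 'rV[R]_k) (E : 'M[R]_(k, m)) :
  row_free E ->
  \rank (\sum_(t in G) <<x t *m E>>)%MS = \rank (\sum_(t in G) <<x t>>)%MS.
Proof.
move=> freeE; rewrite -(mxrankMfree _ freeE).
set S := (\sum_(t in G) <<x t>>)%MS.
have sumME : (S *m E :=: \sum_(t in G) <<x t *m E>>)%MS.
  apply: eqmx_trans (sumsmxMr_gen _ _ _) _.
  by rewrite (eq_bigr (fun t => <<x t *m E>>%MS)) // => t _; apply/eq_genmx/eqmxMr/genmxE.
by rewrite sumME.
Qed.

Lemma rank_homog_bottom (G : {set T}) :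
  \rank (\sum_(t in G) <<prism_homog_vert (inl t)>>)%MS = \rank (homog_span V G).
Proof.
rewrite -(rank_sumsmxMfree G (homog_vert V) row_free_lift_bottom).
by congr (\rank _); apply: eq_bigr => t _; rewrite homog_vert_bottom.
Qed.

Lemma rank_homog_top (G : {set T}) :
  \rank (\sum_(t in G) <<prism_homog_vert (inr t)>>)%MS = \rank (homog_span V G).
Proof.
rewrite -(rank_sumsmxMfree G (homog_vert V) row_free_lift_top).
by congr (\rank _); apply: eq_bigr => t _; rewrite homog_vert_top.
Qed.

(* Both copies together span the bottom copy plus the height direction, which
   lies outside the bottom copy since the height coordinate vanishes on it. *)
Lemma rank_homog_vertical (G : {set T}) : G != set0 ->
  \rank (\sum_(t in G) <<prism_homog_vert (inl t)>> +
         \sum_(t in G) <<prism_homog_vert (inr t)>>)%MS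
  = (\rank (homog_span V G)).+1.
Proof.
case/set0Pn => t0 t0G.
set S0 := (\sum_(t in G) _)%MS; set S1 := (\sum_(t in G) _)%MS.
have topE t : prism_homog_vert (inr t) = prism_homog_vert (inl t) + height_vec.
  by rewrite /homog_vert /height_vec !add_row_mx !addr0 add0r.
have inS0 t : t \in G -> (prism_homog_vert (inl t) <= S0)%MS.
  by move=> tG; apply: (sumsmx_sup t) => //; rewrite genmxE.
have inS1 t : t \in G -> (prism_homog_vert (inr t) <= S1)%MS.
  by move=> tG; apply: (sumsmx_sup t) => //; rewrite genmxE.
have S01E : (S0 + S1 == S0 + height_vec)%MS.
  apply/andP; split; rewrite addsmx_sub addsmxSl /=.
    apply/sumsmx_subP => t tG; rewrite genmxE topE.
    exact: addmx_sub_adds (inS0 t tG) (submx_refl _).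
  have -> : height_vec = - prism_homog_vert (inl t0) + prism_homog_vert (inr t0).
    by rewrite topE addKr.
  by apply: addmx_sub_adds; rewrite ?eqmx_opp ?inS0 ?inS1.
have S0ker : (S0 <= kermx height_coord)%MS.
  apply/sumsmx_subP => t _; rewrite genmxE sub_kermx.
  by rewrite /homog_vert /height_coord !mul_row_col !mulmx0 !mul0mx !addr0.
have height_notin : ~~ (height_vec <= S0)%MS.
  apply/negP => /submx_trans /(_ S0ker); rewrite sub_kermx.
  rewrite /height_vec /height_coord !mul_row_col !mulmx0 ?mul0mx !addr0 add0r.
  by rewrite mul1mx oner_eq0.
rewrite (eqmx_rank S01E) -rank_homog_bottom -/S0.
apply/eqP; rewrite eqn_leq; apply/andP; split.
  case: (mxrank_adds_leqif S0 height_vec) => le_rank _.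
  by apply: leq_trans le_rank _; have := rank_leq_row height_vec; lia.
have [le_rank eq_rank] := mxrank_leqif_sup (addsmxSl S0 height_vec).
by rewrite ltn_neqAle le_rank andbT eq_rank addsmx_sub submx_refl.
Qed.

Lemma face_dim_prism_face k (G : {set T}) : G != set0 ->
  face_dim (prism_vert V) (prism_face k G) = face_dim V G + (k == None)%:R.
Proof.
move=> G0; rewrite !face_dim_rank /homog_span big_sumType.
have inl_face t : (inl t \in prism_face k G) = (k != Some true) && (t \in G).
  by rewrite inE.
have inr_face t : (inr t \in prism_face k G) = (k != Some false) && (t \in G).
  by rewrite inE.
rewrite (eq_bigl _ _ inl_face) (eq_bigl _ _ inr_face).
case: k {inl_face inr_face} => [[]|] /=.
- by rewrite big_pred0_eq adds0mx_id rank_homog_top addr0.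
- by rewrite big_pred0_eq addsmx0_id rank_homog_bottom addr0.
- by rewrite rank_homog_vertical // /homog_span intS; ring.
Qed.

End PrismDimension.

Section PrismMobius.
Variables (R : realFieldType) (n : nat) (T : finType) (V : T -> 'rV[R]_n).

Lemma sum_proper_prism_faces a b (F G : {set T}) (f : {set T} -> int) :
  faceb V G -> F != set0 -> F \subset G -> kind_le a b ->
  \sum_(S | [&& faceb (prism_vert V) S, prism_face a F \subset S
               & S \proper prism_face b G])
     f (prism_base S) * mobius_kind a (prism_kind S)
  = if a == b then \sum_(H | [&& faceb V H, F \subset H & H \proper G]) f H
    else f G.
Proof.
move=> fG F0 FG ab.
have nonempty (H : {set T}) : F \subset H -> H != set0.
  by apply: contraTneq => ->; rewrite subset0.
have G0 := nonempty G FG.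
rewrite (eq_bigl (fun S => (faceb (prism_vert V) S && (S != set0)) &&
           ((prism_face a F \subset S) && (S \proper prism_face b G)))); last first.
  move=> S; case: (faceb _ S); case FS: (_ \subset S); rewrite ?andbF //=.
  suff -> : S != set0 by [].
  by apply: contraTneq FS => ->; rewrite subset0 prism_face_eq0.
rewrite big_mkcondr sum_prism_faces.
(* For a = b only the kind a contributes; for a < b = None the kinds a and
   None cancel, except at H = G where only the kind a is below b. *)
rewrite (eq_bigr (fun H : {set T} => if a == b
    then (if (F \subset H) && ((H \subset G) && ~~ (G \subset H)) then f H else 0)
    else (if [&& F \subset H, H \subset G & G \subset H] then f H else 0)));
  last first.
  move=> H /andP[_ H0].
  under eq_bigr => c _ do
    rewrite properE !prism_face_subset // prism_baseK prism_kindK //.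
  rewrite sum_kind /mobius_kind /kind_le; move: ab.
  by case: a b => [[]|] [[]|] //= _; case: (F \subset H); case: (H \subset G);
     case: (G \subset H) => /=; ring.
case: eqP => _; rewrite -big_mkcondr.
  apply: eq_bigl => H; rewrite properE; case: (faceb V H) => //.
  by case FH: (F \subset H); rewrite /= ?andbF // nonempty ?FH.
rewrite (big_pred1 G) // => H; apply/and4P/eqP => [[_ _ HG GH]|->].
  by apply/eqP; rewrite eqEsubset HG GH.
by rewrite fG G0 FG subxx.
Qed.

Lemma mobius_prism_face a b F G : faceb V F -> F != set0 -> faceb V G ->
  F \subset G -> kind_le a b ->
  mobius (prism_vert V) (prism_face a F) (prism_face b G)
  = mobius V F G * mobius_kind a b.
Proof.
move=> fF F0 fG FG ab; have G0 : G != set0.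
  by apply: contraNneq F0 => G0; rewrite -subset0 -G0.
pose mu_prod S := mobius V F (prism_base S) * mobius_kind a (prism_kind S).
suff /(_ (prism_face b G)) : forall S, faceb (prism_vert V) S ->
    prism_face a F \subset S -> mu_prod S = mobius (prism_vert V) (prism_face a F) S.
  by rewrite /mu_prod prism_baseK prism_kindK // => <-;
     rewrite ?faceb_prism_face ?prism_face_subset ?FG.
apply: mobius_unique => S fS FS.
have [b' [G' [fG' SE]]] := faceb_prismP fS; subst S.
have G'0 : G' != set0.
  by apply: contraTneq FS => ->; rewrite prism_face0 subset0 prism_face_eq0.
move: FS; rewrite prism_face_subset // => /andP[FG' ab'].
rewrite sum_proper_prism_faces // /mu_prod prism_baseK prism_kindK // prism_face_inj //.
rewrite /mobius_kind; case: (eqVneq a b') => [_|ab'n]; rewrite ?andbT ?andbF.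
  rewrite mulr1; case: (eqVneq F G') => [<-|FG'n]; first by rewrite mobius_rec eqxx.
  by rewrite sum_mobius_proper // opprK.
by move: ab'; rewrite /kind_le (negbTE ab'n) /= => ->; rewrite mulrN1.
Qed.

Lemma mobius_z_prism_pair F G : faceb V F -> F != set0 -> faceb V G -> G != set0 ->
  \sum_(a : option bool) \sum_(b : option bool)
     (if prism_face a F \subset prism_face b G
      then mobius_z (prism_vert V) (prism_face a F) (prism_face b G) else 0)
  = (3%:P - 2%:P * 'X) * (if F \subset G then mobius_z V F G else 0).
Proof.
move=> fF F0 fG G0; rewrite !sum_kind !prism_face_subset //.
case FG: (F \subset G); last by rewrite /= !addr0 mulr0.
rewrite /kind_le /= /mobius_z !mobius_prism_face ?face_dim_prism_face // /mobius_kind /=.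
have [d dE] : exists d : nat, face_dim V G - face_dim V F = d%:Z.
  by exists `|face_dim V G - face_dim V F|%N; rewrite abszE ger0_norm // subr_ge0 face_dimS.
have -> : face_dim V G + 1 - (face_dim V F + 1) = d%:Z by rewrite -dE; ring.
have -> : face_dim V G + 1 - (face_dim V F + 0) = d.+1%:Z by rewrite intS -dE; ring.
have -> : face_dim V G + 0 - (face_dim V F + 0) = d%:Z by rewrite -dE; ring.
by rewrite dE /= exprSr; ring.
Qed.

End PrismMobius.

Theorem mainTheorem7 (R : realFieldType) (n : nat) (T : finType)
  (V : T -> 'rV[R]_n) (hV : is_vertex_set V) :
  mobius_poly (prism_vert V) =
    (3%:P - 2%:P * 'X) * (mobius_poly V - bottom_poly V)
    + bottom_poly (prism_vert V).
Proof.
apply/eqP; rewrite -subr_eq; apply/eqP.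
rewrite !mobius_poly_sub_bottom sum_prism_faces mulr_sumr.
under eq_bigr do under eq_bigr do rewrite sum_prism_faces.
apply: eq_bigr => F /andP[fF F0]; rewrite exchange_big mulr_sumr.
by apply: eq_bigr => G /andP[fG G0]; rewrite mobius_z_prism_pair.
Qed.
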